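(* For every integer $m\ge 4$, the commuting graph $\Gamma(H_m)$ of the group $H_m$ defined below is connected.
   Context: For an integer $m\ge 3$, let $V_m$ and $W_m$ be vector spaces over $\mathrm{GF}(2)$ of dimensions $m$ and $m-2$, with ordered bases $x_1,\dots,x_m$ and $y_1,\dots,y_{m-2}$ respectively. Let $f_m:V_m\times V_m\to W_m$ be the bilinear map determined on basis vectors by $f_m(x_i,x_j)=0$ if $j\in\{i,i+1\}$, $f_m(x_i,x_j)=y_{j-i-1}$ if $i+2\le j\le m$, and $f_m(x_i,x_j)=0$ if $i>j$. The group $H_m$ has underlying set $V_m\times W_m$ with multiplication $(a,b)\cdot(c,d)=(a+c,\ f_m(a,c)+b+d)$. For a group $G$, the commuting graph $\Gamma(G)$ is the graph whose vertices are the non-central elements of $G$, two distinct vertices being adjacent if and only if they commute in $G$. *)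

From HB Require Import structures.
From mathcomp Require Import all_boot all_order all_algebra.
Set Implicit Arguments. Unset Strict Implicit. Unset Printing Implicit Defensive.
Import GRing.Theory.
Local Open Scope ring_scope.

(* V_m = 'rV['F_2]_m with basis x_1..x_m the standard row
   vectors (0-indexed here: x_{i+1} <-> index i), W_m = 'rV['F_2]_(m-2) with
   y_{k+1} <-> index k.
   f_m(x_i, x_j) = y_{j-i-1} when i+2 <= j (1-indexed), i.e. with 0-indexed
   i, j, k : the coefficient on y_k is 1 iff j = i + k + 2.  Extended
   bilinearly: f_m(a,c)_k = sum_{i,j, j = i+k+2} a_i c_j. *)
Definition fm (m : nat) (a c : 'rV['F_2]_m) : 'rV['F_2]_(m - 2) :=
  \row_(k < m - 2) \sum_(i < m) \sum_(j < m | (j : nat) == (i + k + 2)%N)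
      a 0 i * c 0 j.

Definition Hm (m : nat) : finType :=
  ('rV['F_2]_m * 'rV['F_2]_(m - 2))%type.

Definition Hmul (m : nat) (x y : Hm m) : Hm m :=
  (x.1 + y.1, fm x.1 y.1 + x.2 + y.2).

Definition Hcommute (m : nat) (x y : Hm m) : bool := Hmul x y == Hmul y x.

Definition Hcentral (m : nat) (x : Hm m) : bool := [forall y, Hcommute x y].

Definition commuting_edge (m : nat) : rel (Hm m) :=
  fun x y => [&& ~~ Hcentral x, ~~ Hcentral y, x != y & Hcommute x y].

Definition commuting_graph_connected (m : nat) : Prop :=
  forall x y : Hm m, ~~ Hcentral x -> ~~ Hcentral y ->
    connect (@commuting_edge m) x y.

From mathcomp Require Import all_boot all_order all_algebra zify.
Set Implicit Arguments. Unset Strict Implicit. Unset Printing Implicit Defensive.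
Import GRing.Theory.
Local Open Scope ring_scope.

(* Two elements commute iff their V-parts a, c satisfy f(a, c) = f(c, a),
   so the central elements are those with a = 0 (witnessed against x_1 and
   x_m once m >= 4), and the commuting graph lives on the nonzero vectors.
   Every such vector is joined to x_m: if a vanishes on x_1, ..., x_l, the
   commutation condition with a vector c vanishing on x_1, ..., x_(l+1) has
   only m - l - 2 nontrivial coordinates, so a rank count gives such a
   c != 0 commuting with a; iterating pushes the support to x_(m-1), x_m,
   where everything commutes with x_m. *)

Lemma mxE_mul_pid_mx (R : pzRingType) n p r (v : 'rV[R]_n) (i : 'I_n) (j : 'I_p) :
  (i : nat) = j -> (v *m pid_mx r) 0 j = if (i < r)%N then v 0 i else 0.
Proof.
move=> eq_ij; rewrite mxE (bigD1 i) //= big1 => [|i' ne_i'i].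
  by rewrite mxE eq_ij eqxx /=; case: ifP; rewrite ?mulr1 ?mulr0 addr0.
rewrite mxE -eq_ij (inj_eq val_inj) (negbTE ne_i'i) /= mulr0 //.
Qed.

Lemma mul_pid_mx_id_row (R : pzRingType) n r (v : 'rV[R]_n) :
  (forall j : 'I_n, (r <= j)%N -> v 0 j = 0) -> v *m pid_mx r = v.
Proof.
move=> v_hi; apply/rowP => j; rewrite (mxE_mul_pid_mx _ _ (erefl (j : nat))).
by case: ltnP => // /v_hi ->.
Qed.

Lemma exists_nonzero_left_kernel (F : fieldType) p q (B : 'M[F]_(p, q)) :
  (\rank B < p)%N -> exists2 c : 'rV_p, c != 0 & c *m B = 0.
Proof.
move=> rkB; have /rowV0Pn[c /sub_kermxP cB nz_c] : kermx B != 0.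
  by rewrite -mxrank_eq0 mxrank_ker -lt0n subn_gt0.
by exists c.
Qed.

Section BilinearForm.

Variable m : nat.
Local Notation V := 'rV['F_2]_m.

Definition vanishes_below (l : nat) (a : V) : Prop :=
  forall i : 'I_m, (i < l)%N -> a 0 i = 0.

Lemma Hcommute_fm (x y : Hm m) : Hcommute x y = (fm x.1 y.1 == fm y.1 x.1).
Proof.
case: x y => a b [c d]; rewrite /Hcommute /Hmul /= xpair_eqE addrC eqxx /=.
by rewrite -!addrA [d + b]addrC (can2_eq (addrK _) (subrK _)) addrK.
Qed.

Lemma fm0l (c : V) : fm 0 c = 0.
Proof.
by apply/rowP => k; rewrite !mxE big1 // => i _; rewrite big1 // => j _; rewrite mxE mul0r.
Qed.

Lemma fm0r (a : V) : fm a 0 = 0.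
Proof.
by apply/rowP => k; rewrite !mxE big1 // => i _; rewrite big1 // => j _; rewrite mxE mulr0.
Qed.

Lemma Hcentral_fst0 (x : Hm m) : x.1 = 0 -> Hcentral x.
Proof. by move=> x1_0; apply/forallP => y; rewrite Hcommute_fm x1_0 fm0l fm0r. Qed.

Lemma fm_delta_mxr (a : V) (j : 'I_m) (k : 'I_(m - 2)) :
  fm a (delta_mx 0 j) 0 k = \sum_(i < m | (j : nat) == (i + k + 2)%N) a 0 i.
Proof.
rewrite mxE [RHS]big_mkcond; apply: eq_bigr => i _; rewrite big_mkcond /=.
rewrite (bigD1 j) //= big1 => [|j' ne_j'j]; last first.
  by rewrite mxE (negbTE ne_j'j) mulr0 if_same.
by rewrite mxE !eqxx mulr1 addr0 eq_sym.
Qed.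

Lemma fm_delta_mxl (a : V) (i : 'I_m) (k : 'I_(m - 2)) :
  fm (delta_mx 0 i) a 0 k = \sum_(j < m | (j : nat) == (i + k + 2)%N) a 0 j.
Proof.
rewrite mxE (bigD1 i) //= [X in _ + X]big1 => [|i' ne_i'i]; last first.
  by rewrite big1 // => j _; rewrite mxE (negbTE ne_i'i) mul0r.
by rewrite addr0; apply: eq_bigr => j _; rewrite mxE !eqxx mul1r.
Qed.

Lemma fm_vanishes_high l (a c : V) (k : 'I_(m - 2)) :
  vanishes_below l a -> vanishes_below l.+1 c -> (m <= k + l + 2)%N ->
  fm a c 0 k = 0 /\ fm c a 0 k = 0.
Proof.
move=> a_lo c_lo le_m_kl; rewrite !mxE.
split; apply: big1 => i _; apply: big1 => j /eqP def_j; have := ltn_ord j.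
  by case: (ltnP i l) => [/a_lo -> | le_li]; [rewrite mul0r | lia].
by case: (ltnP i l.+1) => [/c_lo -> | le_li]; [rewrite mul0r | lia].
Qed.

Definition fm_comm_mx (a : V) : 'M['F_2]_(m, m - 2) :=
  \matrix_(i, k) ((\sum_(i' < m | (i : nat) == (i' + k + 2)%N) a 0 i')
                  - \sum_(j < m | (j : nat) == (i + k + 2)%N) a 0 j).

Lemma mul_fm_comm_mx (a c : V) : c *m fm_comm_mx a = fm a c - fm c a.
Proof.
apply/rowP => k; rewrite !mxE.
under eq_bigr => i _ do rewrite mxE mulrBr !mulr_sumr.
rewrite sumrB (exchange_big_dep xpredT) //=; congr (_ - _).
by apply: eq_bigr => i _; apply: eq_bigr => j _; rewrite mulrC.
Qed.

Lemma exists_commuting_vanishing l (a : V) :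
  (l + 3 <= m)%N -> vanishes_below l a ->
  exists c : V, [/\ c != 0, vanishes_below l.+1 c & fm a c = fm c a].
Proof.
move=> le_l3m a_lo.
(* [c *m B = 0] kills c below l.+1 and the first m - l - 2 coordinates of the
   commutator; the others vanish anyway by [fm_vanishes_high]. *)
pose B := row_mx (fm_comm_mx a *m (pid_mx (m - l - 2) : 'M_(m - 2)))
                 (pid_mx l.+1 : 'M_(m, l.+1)).
have rkB : (\rank B < m)%N.
  have -> : B = row_mx (fm_comm_mx a *m pid_mx (m - l - 2)) 0
                + row_mx 0 (pid_mx l.+1).
    by rewrite add_row_mx addr0 add0r.
  apply: leq_ltn_trans (mxrank_add _ _) _; rewrite rank_row_mx0 rank_row_0mx.
  have rkM := mxrankM_maxr (fm_comm_mx a) (pid_mx (m - l - 2) : 'M_(m - 2)).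
  have le_r : (m - l - 2 <= m - 2)%N by lia.
  rewrite rank_pid_mx // in rkM.
  by apply: leq_ltn_trans (leq_add rkM (rank_leq_col _)) _; lia.
have [c nz_c] := exists_nonzero_left_kernel rkB.
rewrite mul_mx_row => /eqP; rewrite row_mx_eq0 => /andP[/eqP cM /eqP cP].
have c_lo : vanishes_below l.+1 c.
  move=> i lt_il; have := congr1 (fun v : 'rV_l.+1 => v 0 (Ordinal lt_il)) cP.
  by rewrite (@mxE_mul_pid_mx _ _ _ _ _ i) // lt_il mxE.
exists c; split => //; apply/eqP; rewrite -subr_eq0 -mul_fm_comm_mx -cM mulmxA.
rewrite mul_pid_mx_id_row // => k le_rk.
rewrite mul_fm_comm_mx mxE [(- fm c a) 0 k]mxE.
have [-> ->] : fm a c 0 k = 0 /\ fm c a 0 k = 0.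
  by apply: fm_vanishes_high a_lo c_lo _; lia.
by rewrite subr0.
Qed.

End BilinearForm.

Section ExtremeBasisVectors.

Variable n : nat.
Local Notation m := n.+1.
Local Notation V := 'rV['F_2]_m.
Local Notation e_first := (delta_mx 0 ord0 : V).
Local Notation e_last := (delta_mx 0 ord_max : V).

Lemma fm_delta_maxl (a : V) : fm e_last a = 0.
Proof.
apply/rowP => k; rewrite fm_delta_mxl mxE big_pred0 // => -[j lt_j] /=.
by apply/negbTE/eqP; lia.
Qed.

Lemma fm_delta0r (a : V) : fm a e_first = 0.
Proof.
apply/rowP => k; rewrite fm_delta_mxr mxE big_pred0 // => i /=.
by apply/negbTE/eqP; lia.
Qed.

Lemma commute_delta_maxP (a : V) :
  fm a e_last = fm e_last a <-> vanishes_below (m - 2) a.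
Proof.
rewrite fm_delta_maxl; split => [/rowP a_comm [i lt_im] /= lt_i | a_lo].
  have lt_k : (m - 3 - i < m - 2)%N by lia.
  have := a_comm (Ordinal lt_k).
  rewrite fm_delta_mxr mxE (big_pred1 (Ordinal lt_im)) // => -[j lt_j].
  apply/eqP/eqP => [/= def_n | /(congr1 val) /= eq_ji]; last by lia.
  by apply/val_inj => /=; lia.
apply/rowP => k; rewrite fm_delta_mxr mxE big1 // => -[i lt_im] /eqP /= def_m.
by apply: (a_lo (Ordinal lt_im)) => /=; lia.
Qed.

Lemma commute_delta0_vanishes (a : V) (i : 'I_m) :
  fm a e_first = fm e_first a -> (2 <= i)%N -> a 0 i = 0.
Proof.
rewrite fm_delta0r => /rowP a_comm le2i.
have lt_k : (i - 2 < m - 2)%N by have := ltn_ord i; lia.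
have := a_comm (Ordinal lt_k); rewrite fm_delta_mxl mxE (big_pred1 i) // => -[j lt_j].
apply/eqP/eqP => [/= def_n | /(congr1 val) /= eq_ji]; last by lia.
by apply/val_inj => /=; lia.
Qed.

End ExtremeBasisVectors.

Lemma commuting_edge_sym m : symmetric (@commuting_edge m).
Proof.
move=> x y; rewrite /commuting_edge /Hcommute eq_sym [Hmul x y == _]eq_sym.
by case: (Hcentral x); case: (Hcentral y).
Qed.

Section CommutingGraph.

Variable n : nat.
Local Notation m := n.+4.
Local Notation e_last := (delta_mx 0 ord_max : 'rV['F_2]_m).

Lemma Hcentral_fst (x : Hm m) : Hcentral x = (x.1 == 0).
Proof.
apply/idP/eqP => [/forallP x_central | ]; last exact: Hcentral_fst0.
have := x_central (e_last, 0); rewrite Hcommute_fm => /eqP/commute_delta_maxP x_lo.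
have := x_central (delta_mx 0 ord0, 0); rewrite Hcommute_fm => /eqP x_comm0.
apply/rowP => i; rewrite mxE.
have [lt_i2 | /(commute_delta0_vanishes x_comm0) //] := ltnP i 2.
by apply: x_lo; rewrite (leq_trans lt_i2).
Qed.

Lemma commuting_edgeE (x y : Hm m) :
  commuting_edge x y = [&& x.1 != 0, y.1 != 0, x != y & fm x.1 y.1 == fm y.1 x.1].
Proof. by rewrite /commuting_edge !Hcentral_fst Hcommute_fm. Qed.

Lemma connect_delta_max l a b : a != 0 -> vanishes_below l a ->
  connect (@commuting_edge m) (a, b) (e_last, 0).
Proof.
have [k] := ubnP (m - l); elim: k l a b => // k IH l a b lt_ml nz_a a_lo.
have nz_last : e_last != 0.
  by apply/eqP => /rowP/(_ ord_max)/eqP; rewrite !mxE !eqxx oner_eq0.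
have [le_l | lt_l] := leqP (m - 2) l.
  have a_comm : fm a e_last = fm e_last a.
    by apply/commute_delta_maxP => i lt_i; apply: a_lo; apply: leq_trans lt_i le_l.
  have [-> | ne] := eqVneq (a, b) (e_last, 0); first exact: connect0.
  by apply/connect1; rewrite commuting_edgeE nz_a nz_last ne a_comm eqxx.
have lt_lm : (l < m)%N by lia.
have [a_l0 | nz_al] := eqVneq (a 0 (Ordinal lt_lm)) 0.
  have lt_ml1 : (m - l.+1 < k)%N by lia.
  apply: (IH l.+1 a b lt_ml1 nz_a).
  move=> i; rewrite ltnS leq_eqVlt => /orP[/eqP def_i | /a_lo //].
  by rewrite (_ : i = Ordinal lt_lm) //; apply: val_inj.
have le_l3 : (l + 3 <= m)%N by lia.
have [c [nz_c c_lo a_comm]] := exists_commuting_vanishing le_l3 a_lo.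
have lt_ml1 : (m - l.+1 < k)%N by lia.
apply: connect_trans (IH l.+1 c 0 lt_ml1 nz_c c_lo).
apply/connect1; rewrite commuting_edgeE nz_a nz_c a_comm eqxx andbT /=.
by apply: contra nz_al => /eqP[-> _]; rewrite c_lo.
Qed.

Lemma connect_noncentral_delta_max (x : Hm m) :
  x.1 != 0 -> connect (@commuting_edge m) x (e_last, 0).
Proof. by case: x => a b nz_a; apply: (connect_delta_max (l := 0)). Qed.

End CommutingGraph.

Theorem lemma2p2 (m : nat) : (4 <= m)%N -> commuting_graph_connected m.
Proof.
case: m => [|[|[|[|n]]]] // _ x y; rewrite !Hcentral_fst => nc_x nc_y.
apply: connect_trans (connect_noncentral_delta_max nc_x) _.
by rewrite (sym_connect_sym (@commuting_edge_sym _)) connect_noncentral_delta_max.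
Qed.
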